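(* Let $T$ be one of $\mathrm{DLO}$, $\mathrm{DOAG}$, $\mathrm{RCF}$, let $\boldsymbol{M}$ be a model of $T$, and let $x,y$ be finite tuples of variables. Every Boolean combination (inside $\boldsymbol{M}^{(x,y)}$) of finitely many special stable subsets of $\boldsymbol{M}^{(x;y)}$ is a finite union of special stable subsets of $\boldsymbol{M}^{(x;y)}$.
   Context: $\mathrm{DLO}=\mathrm{Th}(\mathbb{R},<)$ (dense linear orders without endpoints) in the language $\{<\}$, $\mathrm{DOAG}=\mathrm{Th}(\mathbb{R},+,<)$ (divisible ordered abelian groups) in the language $\{+,<\}$ (with the usual constants/inverse as appropriate), $\mathrm{RCF}=\mathrm{Th}(\mathbb{R},+,\cdot,<)$ (real closed fields) in the ordered ring language; ''definable'' means definable with parameters from $\boldsymbol{M}$. $\boldsymbol{M}^{x}$ is the cartesian power of $\boldsymbol{M}$ indexed by the variables of $x$, and $\boldsymbol{M}^{(x;y)}$ denotes $\boldsymbol{M}^{(x,y)}$ with the fixed division of variables $(x;y)$. A set is equationally definable if it is defined by a Boolean combination of atomic formulas with parameters from $\boldsymbol{M}$ that do not involve the symbol $<$. A definable set $D\subseteq\boldsymbol{M}^{(x;y)}$ is special stable (with respect to $(x;y)$) if there are definable sets $X\subseteq \boldsymbol{M}^x$, $Y\subseteq\boldsymbol{M}^y$ and an equationally definable set $Z\subseteq\boldsymbol{M}^{(x;y)}$ with $D=Z\cap(X\times Y)$. *)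

From mathcomp Require Import all_boot.
From Stdlib Require Import List.

Set Implicit Arguments.
Unset Strict Implicit.
Unset Printing Implicit Defensive.

Inductive theory := DLO | DOAG | RCF.

(* A structure for the largest language {<, 0, 1, +, -, *}; for smaller
   languages the unused symbols are simply never used in formulas. *)
Record Str := {
  car :> Type;
  s_lt : car -> car -> Prop;
  s_zero : car;
  s_one : car;
  s_add : car -> car -> car;
  s_opp : car -> car;
  s_mul : car -> car -> car }.

Section TheoryAx.
Variable S : Str.
Local Notation "a <' b" := (s_lt a b) (at level 70).
Local Notation "a +' b" := (s_add a b) (at level 50, left associativity).
Local Notation "a *' b" := (s_mul a b) (at level 40, left associativity).

Definition strict_linear_order : Prop :=
  (forall a : S, ~ a <' a) /\
  (forall a b c : S, a <' b -> b <' c -> a <' c) /\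
  (forall a b : S, a <' b \/ a = b \/ b <' a).

Definition DLO_axioms : Prop :=
  strict_linear_order /\
  inhabited S /\
  (forall a b : S, a <' b -> exists c, a <' c /\ c <' b) /\
  (forall a : S, exists b, b <' a) /\
  (forall a : S, exists b, a <' b).

Definition OAG_axioms : Prop :=
  strict_linear_order /\
  (forall a b c : S, a +' (b +' c) = (a +' b) +' c) /\
  (forall a b : S, a +' b = b +' a) /\
  (forall a : S, s_zero S +' a = a) /\
  (forall a : S, s_opp a +' a = s_zero S) /\
  (forall a b c : S, a <' b -> a +' c <' b +' c).

Fixpoint nmul (k : nat) (b : S) : S :=
  match k with O => s_zero S | Datatypes.S k' => b +' nmul k' b end.

Definition DOAG_axioms : Prop :=
  OAG_axioms /\
  (exists a : S, a <> s_zero S) /\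
  (forall (a : S) (k : nat), exists b, nmul k.+1 b = a).

(* Horner evaluation of the polynomial with coefficient list
   [c_0; c_1; ...; c_d] (constant term first). *)
Definition horner (cs : list S) (r : S) : S :=
  fold_right (fun c acc => c +' r *' acc) (s_zero S) cs.

Definition RCF_axioms : Prop :=
  OAG_axioms /\
  (forall a b c : S, a *' (b *' c) = (a *' b) *' c) /\
  (forall a b : S, a *' b = b *' a) /\
  (forall a : S, s_one S *' a = a) /\
  (forall a b c : S, a *' (b +' c) = a *' b +' a *' c) /\
  s_zero S <> s_one S /\
  (forall a : S, a <> s_zero S -> exists b, a *' b = s_one S) /\
  (forall a b : S, s_zero S <' a -> s_zero S <' b -> s_zero S <' a *' b) /\
  (forall a : S, s_zero S <' a -> exists b, b *' b = a) /\
  (* monic polynomials of odd degree have a root *)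
  (forall cs : list S, Nat.odd (length cs) = true ->
     exists r, horner (cs ++ s_one S :: nil) r = s_zero S).
End TheoryAx.

Definition model_of (T : theory) (S : Str) : Prop :=
  match T with
  | DLO => DLO_axioms S
  | DOAG => DOAG_axioms S
  | RCF => RCF_axioms S
  end.

Section Syntax.
Variable M : Type.

Inductive term :=
  | TVar (i : nat) | TPar (c : M) | TZero | TOne
  | TAdd (t u : term) | TOpp (t : term) | TMul (t u : term).

Inductive form :=
  | FTrue | FFalse
  | FEq (t u : term) | FLt (t u : term)
  | FNot (f : form) | FAnd (f g : form) | FOr (f g : form)
  | FEx (i : nat) (f : form) | FAll (i : nat) (f : form).

Fixpoint term_in (T : theory) (t : term) : Prop :=
  match t with
  | TVar _ | TPar _ => True
  | TZero | TOpp _ => T <> DLO /\ (match t with TOpp u => term_in T u | _ => True end)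
  | TAdd u v => T <> DLO /\ term_in T u /\ term_in T v
  | TOne => T = RCF
  | TMul u v => T = RCF /\ term_in T u /\ term_in T v
  end.

Fixpoint form_in (T : theory) (f : form) : Prop :=
  match f with
  | FTrue | FFalse => True
  | FEq t u | FLt t u => term_in T t /\ term_in T u
  | FNot g => form_in T g
  | FAnd g h | FOr g h => form_in T g /\ form_in T h
  | FEx _ g | FAll _ g => form_in T g
  end.

Fixpoint equational (f : form) : Prop :=
  match f with
  | FTrue | FFalse | FEq _ _ => True
  | FLt _ _ | FEx _ _ | FAll _ _ => False
  | FNot g => equational g
  | FAnd g h | FOr g h => equational g /\ equational h
  end.
End Syntax.

Arguments TVar {M}. Arguments TZero {M}. Arguments TOne {M}.
Arguments FTrue {M}. Arguments FFalse {M}.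

Section Semantics.
Variable S : Str.

Fixpoint eval (env : nat -> S) (t : term S) : S :=
  match t with
  | TVar i => env i
  | TPar c => c
  | TZero => s_zero S
  | TOne => s_one S
  | TAdd u v => s_add (eval env u) (eval env v)
  | TOpp u => s_opp (eval env u)
  | TMul u v => s_mul (eval env u) (eval env v)
  end.

Definition upd (env : nat -> S) (i : nat) (a : S) : nat -> S :=
  fun j => if Nat.eqb j i then a else env j.

Fixpoint sat (env : nat -> S) (f : form S) : Prop :=
  match f with
  | FTrue => True
  | FFalse => False
  | FEq t u => eval env t = eval env u
  | FLt t u => s_lt (eval env t) (eval env u)
  | FNot g => ~ sat env g
  | FAnd g h => sat env g /\ sat env h
  | FOr g h => sat env g \/ sat env h
  | FEx i g => exists a, sat (upd env i a) g
  | FAll i g => forall a, sat (upd env i a) g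
  end.

(* Subsets of M^x (x a tuple of n variables, interpreted as variables 0..n-1). *)
Definition tset (n : nat) := ('I_n -> S) -> Prop.

(* Subsets of M^(x;y): x interpreted as variables 0..n-1, y as n..n+m-1. *)
Definition pset (n m : nat) := (('I_n -> S) * ('I_m -> S)) -> Prop.

Definition env_ext n (a : 'I_n -> S) (env : nat -> S) : Prop :=
  forall i : 'I_n, env i = a i.

Definition env_ext2 n m (p : ('I_n -> S) * ('I_m -> S)) (env : nat -> S) : Prop :=
  (forall i : 'I_n, env i = p.1 i) /\ (forall j : 'I_m, env (n + j) = p.2 j).

(* definable with parameters (any other free variables of the formula
   must be irrelevant, which is forced by quantifying over all environments) *)
Definition definable (T : theory) n (X : tset n) : Prop :=
  exists phi : form S, form_in T phi /\
    forall a env, env_ext a env -> (X a <-> sat env phi).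

Definition eq_definable2 (T : theory) n m (Z : pset n m) : Prop :=
  exists phi : form S, form_in T phi /\ equational phi /\
    forall p env, env_ext2 p env -> (Z p <-> sat env phi).

Definition special_stable (T : theory) n m (D : pset n m) : Prop :=
  exists (X : tset n) (Y : tset m) (Z : pset n m),
    definable T X /\ definable T Y /\ eq_definable2 T Z /\
    forall p, D p <-> (Z p /\ X p.1 /\ Y p.2).
End Semantics.

Inductive boolcomb {A : Type} (G : list (A -> Prop)) : (A -> Prop) -> Prop :=
  | bc_gen D : List.In D G -> boolcomb G D
  | bc_full : boolcomb G (fun _ => True)
  | bc_compl D : boolcomb G D -> boolcomb G (fun p => ~ D p)
  | bc_inter D E : boolcomb G D -> boolcomb G E -> boolcomb G (fun p => D p /\ E p)
  | bc_union D E : boolcomb G D -> boolcomb G E -> boolcomb G (fun p => D p \/ E p).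

From mathcomp Require Import all_boot.
From Stdlib Require Import List Classical.

(* Finite unions of special stable sets form a Boolean algebra of subsets of
   M^(x;y); since it contains every special stable set, it contains every
   Boolean combination of them.  No property of the theory T is needed: the
   argument only uses that definable sets and equationally definable sets are
   closed under the Boolean connectives. *)

Section Closure.
Variables (T : theory) (S : Str).

Lemma definable_full k : definable T (fun _ : 'I_k -> S => True).
Proof. by exists FTrue; split=> // a env _. Qed.

Lemma definable_compl k (X : tset S k) :
  definable T X -> definable T (fun a => ~ X a).
Proof.
move=> [phi [phiT defX]]; exists (FNot phi); split=> // a env env_a /=.
by rewrite (defX a env env_a).
Qed.

Lemma definable_inter k (X Y : tset S k) :
  definable T X -> definable T Y -> definable T (fun a => X a /\ Y a).
Proof.
move=> [phi [phiT defX]] [psi [psiT defY]]; exists (FAnd phi psi).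
split=> [//|a env env_a /=].
by rewrite (defX a env env_a) (defY a env env_a).
Qed.

Variables n m : nat.

Lemma eq_definable_full :
  eq_definable2 T (fun _ : ('I_n -> S) * ('I_m -> S) => True).
Proof. by exists FTrue; do 2!split=> //. Qed.

Lemma eq_definable_compl (Z : pset S n m) :
  eq_definable2 T Z -> eq_definable2 T (fun p => ~ Z p).
Proof.
move=> [phi [phiT [phiE defZ]]]; exists (FNot phi); do 2!split=> //.
by move=> p env env_p /=; rewrite (defZ p env env_p).
Qed.

Lemma eq_definable_inter (Z W : pset S n m) :
  eq_definable2 T Z -> eq_definable2 T W -> eq_definable2 T (fun p => Z p /\ W p).
Proof.
move=> [phi [phiT [phiE defZ]]] [psi [psiT [psiE defW]]].
exists (FAnd phi psi); do 2!split=> //.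
by move=> p env env_p /=; rewrite (defZ p env env_p) (defW p env env_p).
Qed.

Definition ss_box (X : tset S n) (Y : tset S m) (Z : pset S n m) : pset S n m :=
  fun p => Z p /\ X p.1 /\ Y p.2.

Lemma ss_box_special_stable (X : tset S n) (Y : tset S m) (Z : pset S n m) :
  definable T X -> definable T Y -> eq_definable2 T Z ->
  special_stable T (ss_box X Y Z).
Proof. by move=> defX defY defZ; exists X, Y, Z. Qed.

Lemma special_stable_ext (D D' : pset S n m) :
  (forall p, D p <-> D' p) -> special_stable T D -> special_stable T D'.
Proof.
move=> eqD [X [Y [Z [defX [defY [defZ eqD0]]]]]].
exists X, Y, Z; do 3!split=> //; move=> p; rewrite -eqD; exact: eqD0.
Qed.

Lemma special_stable_full :
  special_stable T (fun _ : ('I_n -> S) * ('I_m -> S) => True).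
Proof.
apply: (@special_stable_ext (ss_box (fun _ => True) (fun _ => True) (fun _ => True))).
  by rewrite /ss_box.
apply: ss_box_special_stable;
  [exact: definable_full | exact: definable_full | exact: eq_definable_full].
Qed.

(* (Z1 ∩ (X1 × Y1)) ∩ (Z2 ∩ (X2 × Y2)) = (Z1 ∩ Z2) ∩ ((X1 ∩ X2) × (Y1 ∩ Y2)). *)
Lemma special_stable_inter (D1 D2 : pset S n m) :
  special_stable T D1 -> special_stable T D2 ->
  special_stable T (fun p => D1 p /\ D2 p).
Proof.
move=> [X1 [Y1 [Z1 [defX1 [defY1 [defZ1 eqD1]]]]]].
move=> [X2 [Y2 [Z2 [defX2 [defY2 [defZ2 eqD2]]]]]].
apply: (@special_stable_ext (ss_box (fun a => X1 a /\ X2 a)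
          (fun b => Y1 b /\ Y2 b) (fun p => Z1 p /\ Z2 p))).
  by move=> p; rewrite /ss_box eqD1 eqD2; tauto.
apply: ss_box_special_stable;
  [exact: definable_inter | exact: definable_inter | exact: eq_definable_inter].
Qed.

Definition ss_union (B : pset S n m) : Prop :=
  exists L : list (pset S n m),
    (forall D, List.In D L -> special_stable T D) /\
    (forall p, B p <-> exists D, List.In D L /\ D p).

Lemma ss_union_ext {B B' : pset S n m} :
  (forall p, B p <-> B' p) -> ss_union B -> ss_union B'.
Proof. by move=> eqB [L [ssL eqL]]; exists L; split=> // p; rewrite -eqB. Qed.

Lemma ss_union_special_stable (D : pset S n m) : special_stable T D -> ss_union D.
Proof.
move=> ssD; exists (D :: nil); split=> [D' [<-|[]] //|p].
split=> [Dp|[D' [[<-|[]] //]]]; exists D; split=> //; exact: in_eq.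
Qed.

Lemma ss_union_full : ss_union (fun _ => True).
Proof. exact/ss_union_special_stable/special_stable_full. Qed.

Lemma ss_union_union (B1 B2 : pset S n m) :
  ss_union B1 -> ss_union B2 -> ss_union (fun p => B1 p \/ B2 p).
Proof.
move=> [L1 [ssL1 eqL1]] [L2 [ssL2 eqL2]]; exists (L1 ++ L2); split.
  by move=> D inD; case: (in_app_or _ _ _ inD); [exact: ssL1 | exact: ssL2].
move=> p; rewrite eqL1 eqL2; split.
  by move=> [] [D [inD Dp]]; exists D; split=> //; apply: in_or_app; tauto.
move=> [D [inD Dp]]; case: (in_app_or _ _ _ inD) => inD'; [left | right]; by exists D.
Qed.

Lemma ss_union_inter (B1 B2 : pset S n m) :
  ss_union B1 -> ss_union B2 -> ss_union (fun p => B1 p /\ B2 p).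
Proof.
move=> [L1 [ssL1 eqL1]] [L2 [ssL2 eqL2]].
pose meet (pr : pset S n m * pset S n m) : pset S n m := fun p => pr.1 p /\ pr.2 p.
exists (map meet (list_prod L1 L2)); split.
  move=> D /in_map_iff [[D1 D2] [<- /in_prod_iff [in1 in2]]].
  by apply: special_stable_inter; [exact: ssL1 | exact: ssL2].
move=> p; rewrite eqL1 eqL2; split.
  move=> [[D1 [in1 D1p]] [D2 [in2 D2p]]]; exists (meet (D1, D2)); split=> //.
  by apply: in_map; apply/in_prod_iff.
move=> [D [/in_map_iff [[D1 D2] [<- /in_prod_iff [in1 in2]]] [D1p D2p]]].
by split; [exists D1 | exists D2].
Qed.

(* The complement of Z ∩ (X × Y) is
   ((M^x \ X) × M^y) ∪ (M^x × (M^y \ Y)) ∪ ((M^(x,y) \ Z) ∩ (X × Y)). *)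
Lemma ss_union_compl_special_stable (D : pset S n m) :
  special_stable T D -> ss_union (fun p => ~ D p).
Proof.
move=> [X [Y [Z [defX [defY [defZ eqD]]]]]].
apply: (@ss_union_ext (fun p =>
          (ss_box (fun a => ~ X a) (fun _ => True) (fun _ => True) p \/
           ss_box (fun _ => True) (fun b => ~ Y b) (fun _ => True) p) \/
          ss_box X Y (fun p => ~ Z p) p)).
  move=> p; rewrite /ss_box eqD.
  by case: (classic (X p.1)); case: (classic (Y p.2)); tauto.
apply: ss_union_union; first apply: ss_union_union;
  apply: ss_union_special_stable; apply: ss_box_special_stable;
  by [ | apply: definable_full | apply: definable_compl
     | apply: eq_definable_full | apply: eq_definable_compl ].
Qed.

(* De Morgan: the complement of a finite union of special stable sets is the
   intersection of their complements, each of which is in ss_union. *)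
Lemma ss_union_compl_list {L : list (pset S n m)} :
  (forall D, List.In D L -> special_stable T D) ->
  ss_union (fun p => ~ exists D, List.In D L /\ D p).
Proof.
elim: L => [|D L IH] ssL.
  by apply: ss_union_ext ss_union_full => p; split=> // _ [D [[] _]].
apply: (@ss_union_ext (fun p => ~ D p /\ ~ exists D', List.In D' L /\ D' p)).
  move=> p; split.
    by move=> [nDp nLp] [D' [[<- //|inD'] D'p]]; apply: nLp; exists D'.
  move=> nDLp; split=> [Dp|[D' [inD' D'p]]]; apply: nDLp.
    by exists D; split=> //; left.
  by exists D'; split=> //; right.
apply: ss_union_inter.
  by apply: ss_union_compl_special_stable; apply: ssL; left.
by apply: IH => D' inD'; apply: ssL; right.
Qed.

Lemma ss_union_compl (B : pset S n m) : ss_union B -> ss_union (fun p => ~ B p).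
Proof.
move=> [L [ssL eqL]]; apply: ss_union_ext (ss_union_compl_list ssL) => p.
by rewrite eqL.
Qed.

End Closure.

Theorem lemma2p2 (T : theory) (S : Str) (HS : model_of T S) (n m : nat)
  (G : list (pset S n m)) :
  (forall D, List.In D G -> special_stable T D) ->
  forall B : pset S n m, boolcomb G B ->
  exists L : list (pset S n m),
    (forall D, List.In D L -> special_stable T D) /\
    (forall p, B p <-> exists D, List.In D L /\ D p).
Proof.
move=> ssG B combB; change (@ss_union T S n m B); elim: combB.
- by move=> D inD; apply/ss_union_special_stable/ssG.
- exact: ss_union_full.
- by move=> D _; apply: ss_union_compl.
- by move=> D E _ ssD _ ssE; apply: ss_union_inter.
- by move=> D E _ ssD _ ssE; apply: ss_union_union.
Qed.
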